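(* Let $\sigma$ be a prime 2-structure and let $X\subsetneq V(\sigma)$ be such that $\sigma[X]$ is prime; write $\overline{X}=V(\sigma)\setminus X$. Suppose that $q^a_{(\sigma,\overline{X})}\neq\emptyset$. If $\overline{X}$ is finite and $|\overline{X}|\geq 4$, then there exist distinct $v,w\in\overline{X}$ such that $\sigma-\{v,w\}$ is prime.
   Context: A 2-structure $\sigma$ consists of a vertex set $V(\sigma)$ and an equivalence relation $\equiv_\sigma$ on ordered pairs of distinct vertices; $E(\sigma)$ is its set of equivalence classes. $\sigma[W]$ is the induced 2-structure on $W$; $\sigma-W=\sigma[V(\sigma)\setminus W]$. A module is a set $M$ such that for all $x,y\in M$ and $v\notin M$, $(x,v)\equiv_\sigma(y,v)$ and $(v,x)\equiv_\sigma(v,y)$; $\emptyset$, $V(\sigma)$, singletons are trivial; $\sigma$ is prime if $|V(\sigma)|\geq3$ and all modules are trivial. For $X$ with $\sigma[X]$ prime: $\langle X\rangle_\sigma$ is the set of $v\in\overline{X}$ such that $X$ is a module of $\sigma[X\cup\{v\}]$; for $\alpha\in X$, $X_\sigma(\alpha)$ is the set of $v\in\overline{X}$ such that $\{\alpha,v\}$ is a module of $\sigma[X\cup\{v\}]$. For $e,f\in E(\sigma)$: $\langle X\rangle^{(e,f)}_\sigma$ is the set of $v\in\langle X\rangle_\sigma$ with $(v,\alpha)\in e$ and $(\alpha,v)\in f$ for $\alpha\in X$ (independent of $\alpha$); $X^{(e,f)}_\sigma(\alpha)$ is the set of $v\in X_\sigma(\alpha)$ with $(v,\alpha)\in e$ and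 $(\alpha,v)\in f$. $q^a_{(\sigma,\overline{X})}$ is the set of nonempty sets of the form $\langle X\rangle^{(e,f)}_\sigma$ or $X^{(e,f)}_\sigma(\alpha)$ ($\alpha\in X$) with $e\neq f$. *)

(* 2-structures on an arbitrary vertex type T (V(sigma) = all of T);
   subsets of vertices are predicates T -> Prop. *)
From Stdlib Require Import List.
Import ListNotations.

Definition is_2structure {T : Type} (R : T * T -> T * T -> Prop) : Prop :=
  (forall p q, R p q -> fst p <> snd p /\ fst q <> snd q) /\
  (forall p, fst p <> snd p -> R p p) /\
  (forall p q, R p q -> R q p) /\
  (forall p q r, R p q -> R q r -> R p r).

(* M is a module of sigma[W] (M is a subset of W). *)
Definition is_module {T : Type} (R : T * T -> T * T -> Prop) (W M : T -> Prop) : Prop :=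
  (forall x, M x -> W x) /\
  forall x y v, M x -> M y -> W v -> ~ M v ->
    R (x, v) (y, v) /\ R (v, x) (v, y).

Definition trivial_in {T : Type} (W M : T -> Prop) : Prop :=
  (forall x, ~ M x) \/ (forall x, M x <-> W x) \/ (exists a, forall x, M x <-> x = a).

Definition prime_on {T : Type} (R : T * T -> T * T -> Prop) (W : T -> Prop) : Prop :=
  (exists a b c, W a /\ W b /\ W c /\ a <> b /\ a <> c /\ b <> c) /\
  forall M, is_module R W M -> trivial_in W M.

Definition is_class {T : Type} (R : T * T -> T * T -> Prop) (e : T * T -> Prop) : Prop :=
  exists p, fst p <> snd p /\ forall q, e q <-> R p q.

Definition addv {T : Type} (X : T -> Prop) (v : T) : T -> Prop := fun u => X u \/ u = v.

Definition in_angle {T : Type} (R : T * T -> T * T -> Prop) (X : T -> Prop) (v : T) : Prop :=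
  ~ X v /\ is_module R (addv X v) X.

Definition in_Xalpha {T : Type} (R : T * T -> T * T -> Prop) (X : T -> Prop) (alpha v : T) : Prop :=
  ~ X v /\ is_module R (addv X v) (fun u => u = alpha \/ u = v).

Definition in_angle_ef {T : Type} (R : T * T -> T * T -> Prop) (X : T -> Prop)
    (e f : T * T -> Prop) (v : T) : Prop :=
  in_angle R X v /\ forall alpha, X alpha -> e (v, alpha) /\ f (alpha, v).

Definition in_Xalpha_ef {T : Type} (R : T * T -> T * T -> Prop) (X : T -> Prop)
    (alpha : T) (e f : T * T -> Prop) (v : T) : Prop :=
  in_Xalpha R X alpha v /\ e (v, alpha) /\ f (alpha, v).

(* Y belongs to q^a_{(sigma, complement of X)} *)
Definition in_qa {T : Type} (R : T * T -> T * T -> Prop) (X : T -> Prop) (Y : T -> Prop) : Prop :=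
  (exists v, Y v) /\
  exists e f, is_class R e /\ is_class R f /\ ~ (forall p, e p <-> f p) /\
    ((forall v, Y v <-> in_angle_ef R X e f v) \/
     (exists alpha, X alpha /\ forall v, Y v <-> in_Xalpha_ef R X alpha e f v)).

(* Call {a, b} ⊆ X̄ a prime pair when σ[X ∪ {a, b}] is prime.  Inside a prime σ, a prime
   B with two outside vertices always extends by a prime pair: otherwise the set of u with
   B ∪ {u} prime, the complement of ⟨B⟩, or some {g} ∪ B(g) would be a nontrivial module
   of σ.  So if |X̄| is even, or if X extends primely by one or by three vertices, repeated
   pair extensions leave exactly two removable vertices.
   Otherwise the prime pairs form a graph on X̄ without isolated vertices, in which vertices
   with a common neighbour are twins over X and distinct vertices never have the same
   neighbourhood.  Because e ≠ f, the vertices of a set Y ∈ q^a have neighbourhoods totally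
   ordered by inclusion.  A vertex u ∈ Y with least neighbourhood either lies in an isolated
   prime pair {u, s}, and then σ - {u, s} is prime, or yields a prime pair {y, t} such that
   q^a stays nonempty for X ∪ {y, t}; then induction on |X̄| applies, the case |X̄| = 5 being
   impossible. *)

From Stdlib Require Import List Classical Lia Arith.
Import ListNotations.

Section Lists.
Variable T : Type.

Lemma list_exists_minimal (P : T -> Prop) (le : T -> T -> Prop) (l : list T) :
  (forall x y z, le x y -> le y z -> le x z) -> (forall x, le x x) ->
  (forall x y, P x -> P y -> le x y \/ le y x) ->
  (exists x, In x l /\ P x) -> exists m, In m l /\ P m /\ forall y, In y l -> P y -> le m y.
Proof.
  intros htr hrf htot; induction l as [|a l IH]; intros [x [hx px]]; [destruct hx|].
  destruct (classic (exists x, In x l /\ P x)) as [hex|hnex].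
  - destruct (IH hex) as [m [hm [pm hmin]]].
    destruct (classic (P a)) as [pa|npa]; [destruct (htot a m pa pm) as [lam|lma]|].
    + exists a; split; [left; auto|split; auto].
      intros y [<-|hy] py; eauto.
    + exists m; split; [right; auto|split; auto].
      intros y [<-|hy] py; auto.
    + exists m; split; [right; auto|split; auto].
      intros y [<-|hy] py; [contradiction|auto].
  - destruct hx as [<-|hx]; [|exfalso; apply hnex; exists x; auto].
    exists a; split; [left; auto|split; auto].
    intros y [<-|hy] py; [auto|exfalso; apply hnex; exists y; auto].
Qed.

Lemma NoDup_remove_one (l : list T) a : NoDup l -> In a l ->
  exists l', NoDup l' /\ (forall v, In v l' <-> In v l /\ v <> a) /\ length l = S (length l').
Proof.
  induction l as [|x l IH]; intros hnd ha; [destruct ha|].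
  inversion hnd as [|x' l' hx hnd' E]; subst.
  destruct (classic (x = a)) as [<-|ne].
  - exists l; split; [auto|split; [|reflexivity]].
    intro v; split; [intros hv; split; [right; auto|intros <-; contradiction]|].
    intros [[<-|hv] nv]; [contradiction|auto].
  - destruct ha as [<-|ha]; [contradiction|].
    destruct (IH hnd' ha) as [l'' [hnd'' [hin hlen]]].
    exists (x :: l''); split; [constructor; auto; rewrite hin; tauto|split; [|simpl; auto]].
    intro v; simpl; rewrite hin; split; [intros [<-|[hv nv]]|intros [[<-|hv] nv]]; auto.
Qed.

Lemma NoDup_extra (l k : list T) : NoDup l -> NoDup k -> length l = S (length k) ->
  incl k l -> exists z, In z l /\ ~ In z k /\ forall w, In w l -> In w (z :: k).
Proof.
  intros hl hk hlen hkl.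
  assert (hz : exists z, In z l /\ ~ In z k).
  { apply NNPP; intro hn.
    assert (hlk : incl l k) by (intros z hz; apply NNPP; intro; apply hn; exists z; auto).
    pose proof (NoDup_incl_length hl hlk); lia. }
  destruct hz as [z [hzl hzk]]; exists z; repeat split; auto.
  intros w hw; apply NNPP; intro hn.
  assert (hnd : NoDup (w :: z :: k)) by (repeat constructor; auto).
  assert (hinc : incl (w :: z :: k) l) by (intros q [<-|[<-|hq]]; auto).
  pose proof (NoDup_incl_length hnd hinc); simpl in *; lia.
Qed.

End Lists.

Section TwoStructure.
Variable T : Type.
Variable R : T * T -> T * T -> Prop.
Hypothesis HR : is_2structure R.

Lemma R_sym p q : R p q -> R q p.
Proof. destruct HR as [_ [_ [H _]]]; auto. Qed.

Lemma R_trans p q r : R p q -> R q r -> R p r.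
Proof. destruct HR as [_ [_ [_ H]]]; eauto. Qed.

Lemma R_refl a b : a <> b -> R (a, b) (a, b).
Proof. destruct HR as [_ [H _]]; intro h; exact (H (a, b) h). Qed.

Definition indist (o a b : T) := R (a, o) (b, o) /\ R (o, a) (o, b).

Definition twins (B : T -> Prop) (a b : T) := forall x, B x -> indist x a b.

Lemma indist_refl o a : o <> a -> indist o a a.
Proof. split; apply R_refl; auto. Qed.

Lemma indist_sym o a b : indist o a b -> indist o b a.
Proof. intros [h1 h2]; split; apply R_sym; auto. Qed.

Lemma indist_trans o a b c : indist o a b -> indist o b c -> indist o a c.
Proof. intros [h1 h2] [h3 h4]; split; eapply R_trans; eauto. Qed.

Lemma twins_sym B a b : twins B a b -> twins B b a.
Proof. intros h x hx; apply indist_sym, h, hx. Qed.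

Lemma twins_trans B a b c : twins B a b -> twins B b c -> twins B a c.
Proof. intros h1 h2 x hx; eapply indist_trans; eauto. Qed.

Lemma twins_sub B C a b : (forall x, B x -> C x) -> twins C a b -> twins B a b.
Proof. intros hBC h x hx; apply h, hBC, hx. Qed.

Definition three_points (W : T -> Prop) :=
  exists a b c, W a /\ W b /\ W c /\ a <> b /\ a <> c /\ b <> c.

Lemma three_points_sub (B C : T -> Prop) :
  (forall x, B x -> C x) -> three_points B -> three_points C.
Proof. intros hBC [a [b [c h]]]; exists a, b, c; intuition. Qed.

Lemma three_points_pair_except B g : three_points B ->
  exists x y, B x /\ B y /\ x <> y /\ x <> g /\ y <> g.
Proof.
  intros [a [b [c h]]].
  destruct (classic (a = g)) as [->|na]; [exists b, c; intuition|].
  destruct (classic (b = g)) as [->|nb]; [exists a, c; intuition|].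
  exists a, b; intuition.
Qed.

Lemma three_points_except2 B g g' : three_points B -> exists x, B x /\ x <> g /\ x <> g'.
Proof.
  intros hB; destruct (three_points_pair_except B g hB) as [x [y [hx [hy [hxy [hxg hyg]]]]]].
  destruct (classic (x = g')) as [->|nx]; [exists y|exists x]; auto.
Qed.

Definition add2 (B : T -> Prop) (a b : T) := addv (addv B a) b.

Lemma is_module_sub W W' M M' : is_module R W M -> (forall x, W' x -> W x) ->
  (forall x, M' x -> W' x) -> (forall x, W' x -> (M x <-> M' x)) -> is_module R W' M'.
Proof.
  intros [_ hM] hW hM' hMM'; split; auto.
  intros x y v hx hy hv hnv; apply hM; auto; [apply hMM'; auto..|].
  intro h; apply hnv, hMM'; auto.
Qed.

Lemma prime_on_ext W W' : (forall x, W x <-> W' x) -> prime_on R W -> prime_on R W'.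
Proof.
  intros hW [h3 hp]; split.
  - apply (three_points_sub W); [apply hW|exact h3].
  - intros M hM.
    assert (hM' : is_module R W M).
    { apply (is_module_sub W' W M M hM); [apply hW|intros x hx; apply hW, hM, hx|tauto]. }
    destruct (hp M hM') as [h|[h|h]]; [left|right; left|right; right]; auto.
    intro x; rewrite h; apply hW.
Qed.

Lemma is_module_of_rep W M : (forall x, M x -> W x) ->
  (forall v, W v -> ~ M v -> exists r, forall m, M m -> indist v m r) -> is_module R W M.
Proof.
  intros hMW hrep; split; auto.
  intros x y v hx hy hv hnv; destruct (hrep v hv hnv) as [r hr].
  apply (indist_trans v x r y); [|apply indist_sym]; auto.
Qed.

Lemma nontrivial_module_not_prime W M a b c : prime_on R W -> is_module R W M ->
  M a -> M b -> a <> b -> W c -> ~ M c -> False.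
Proof.
  intros [_ hp] hM ha hb hab hc hnc.
  destruct (hp M hM) as [h|[h|[d h]]].
  - exact (h a ha).
  - exact (hnc (proj2 (h c) hc)).
  - apply hab; rewrite (proj1 (h a) ha), (proj1 (h b) hb); reflexivity.
Qed.

Lemma prime_module_trace B W M : prime_on R B -> is_module R W M -> (forall x, B x -> W x) ->
  (forall x, B x -> ~ M x) \/ (forall x, B x -> M x) \/
  (exists g, B g /\ M g /\ forall x, B x -> M x -> x = g).
Proof.
  intros [_ hp] hM hBW.
  destruct (hp (fun x => M x /\ B x)) as [h|[h|[g h]]].
  - apply (is_module_sub W B M); tauto.
  - left; intros x hx hm; exact (h x (conj hm hx)).
  - right; left; intros x hx; apply h, hx.
  - right; right; exists g; destruct (proj2 (h g) eq_refl); repeat split; auto.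
    intros x hx hm; apply h; auto.
Qed.

Lemma not_prime_module W : three_points W -> ~ prime_on R W ->
  exists M, is_module R W M /\ ~ trivial_in W M.
Proof.
  intros h3 hn; apply NNPP; intro hc; apply hn; split; auto.
  intros M hM; apply NNPP; intro ht; apply hc; exists M; auto.
Qed.

Lemma in_angle_iff B v :
  in_angle R B v <-> ~ B v /\ forall x y, B x -> B y -> indist v x y.
Proof.
  unfold in_angle, addv; split.
  - intros [hv [_ hM]]; split; auto; intros x y hx hy; apply hM; auto.
  - intros [hv h]; split; auto; split; auto.
    intros x y w hx hy [hw| ->] hnw; [contradiction|apply h; auto].
Qed.

Lemma in_Xalpha_iff B g v : B g ->
  in_Xalpha R B g v <-> ~ B v /\ forall x, B x -> x <> g -> indist x g v.
Proof.
  intros hg; unfold in_Xalpha, addv; split.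
  - intros [hv [_ hM]]; split; auto; intros x hx hxg.
    apply (hM g v x); auto; intros [->| ->]; tauto.
  - intros [hv h]; split; auto; split; [intros x [->| ->]; auto|].
    intros x y w hx hy [hw| ->] hnw; [|tauto].
    assert (wg : w <> g) by tauto; assert (wv : w <> v) by tauto.
    destruct hx as [->| ->]; destruct hy as [->| ->].
    + apply indist_refl; auto.
    + apply h; auto.
    + apply indist_sym, h; auto.
    + apply indist_refl; auto.
Qed.

Lemma in_angle_sub B C v : (forall x, B x -> C x) -> in_angle R C v -> in_angle R B v.
Proof. rewrite !in_angle_iff; intros hBC [hv h]; split; auto. Qed.

Lemma in_Xalpha_sub B C g v : (forall x, B x -> C x) -> B g ->
  in_Xalpha R C g v -> in_Xalpha R B g v.
Proof.
  intros hBC hg; rewrite !in_Xalpha_iff; auto; intros [hv h]; split; auto.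
Qed.

Lemma indist_swap o m x y :
  indist x o m -> indist y o m -> indist o x y -> indist m x y.
Proof.
  intros [x1 x2] [y1 y2] [o1 o2]; split.
  - eapply R_trans; [apply R_sym, x2|]. eapply R_trans; [exact o1|exact y2].
  - eapply R_trans; [apply R_sym, x1|]. eapply R_trans; [exact o2|exact y1].
Qed.

Lemma in_angle_twins B o m : in_angle R B o -> twins B o m -> ~ B m -> in_angle R B m.
Proof.
  rewrite !in_angle_iff; intros [ho h] htw hm; split; auto.
  intros x y hx hy; apply (indist_swap o); auto.
Qed.

Lemma in_Xalpha_twins B g m o : B g -> in_Xalpha R B g m -> twins B m o -> ~ B o ->
  in_Xalpha R B g o.
Proof.
  intros hg; rewrite !in_Xalpha_iff; auto; intros [hm h] htw ho; split; auto.
  intros x hx hxg; apply (indist_trans x g m o); auto.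
Qed.

Lemma twins_not_prime B a b x0 : B x0 -> ~ B a -> ~ B b -> a <> b -> twins B a b ->
  ~ prime_on R (add2 B a b).
Proof.
  intros hx0 ha hb hab htw hp.
  apply (nontrivial_module_not_prime (add2 B a b) (fun z => z = a \/ z = b) a b x0 hp);
    unfold add2, addv in *; auto.
  - apply is_module_of_rep; [intros z [->| ->]; auto|].
    intros v hv hnv; exists b; intros m [->| ->]; [|apply indist_refl; tauto].
    apply htw; destruct hv as [[hv| ->]| ->]; tauto.
  - intros [->| ->]; contradiction.
Qed.

Lemma class_iff e p q : is_class R e -> e p -> (e q <-> R p q).
Proof.
  intros [p0 [_ he]] hp; rewrite he; rewrite he in hp; split; intro h.
  - eapply R_trans; [apply R_sym, hp|exact h].
  - eapply R_trans; eauto.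
Qed.

Lemma class_closed e p q : is_class R e -> e p -> R p q -> e q.
Proof. intros he hp; apply (class_iff e p q he hp). Qed.

Lemma addv_cases B v : prime_on R B -> ~ B v ->
  prime_on R (addv B v) \/ in_angle R B v \/ exists g, B g /\ in_Xalpha R B g v.
Proof.
  intros hB hv.
  destruct (classic (prime_on R (addv B v))) as [hp|hn]; [left; exact hp|right].
  assert (h3 : three_points (addv B v)).
  { apply (three_points_sub B); [unfold addv; tauto|apply hB]. }
  destruct (not_prime_module (addv B v) h3 hn) as [M [hM hnt]].
  assert (hsub : forall x, M x -> B x \/ x = v) by apply hM.
  assert (hBW : forall x, B x -> addv B v x) by (unfold addv; tauto).
  destruct (prime_module_trace B (addv B v) M hB hM hBW) as [h|[h|[g [hg [hMg hu]]]]];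
    destruct (classic (M v)) as [mv|nmv].
  - exfalso; apply hnt; right; right; exists v; intro x; split; [|intros ->; auto].
    intro mx; destruct (hsub x mx) as [bx|ex]; [destruct (h x bx mx)|exact ex].
  - exfalso; apply hnt; left; intros x mx.
    destruct (hsub x mx) as [bx| ->]; [exact (h x bx mx)|contradiction].
  - exfalso; apply hnt; right; left; intro x; split; [apply hM|].
    intros [bx| ->]; auto.
  - left; split; auto. apply (is_module_sub (addv B v) (addv B v) M B hM); [tauto|exact hBW|].
    intros x [bx| ->]; split; auto; intro; contradiction.
  - right; exists g; split; auto; split; auto.
    apply (is_module_sub (addv B v) (addv B v) M _ hM);
      [tauto|unfold addv; intros x [->| ->]; auto|].
    intros x hx; split; [intros mx; destruct (hsub x mx); auto|intros [->| ->]; auto].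
  - exfalso; apply hnt; right; right; exists g; intro x; split; [|intros ->; auto].
    intro mx; destruct (hsub x mx) as [bx| ->]; [auto|contradiction].
Qed.

Lemma angle_Xalpha_disjoint B v g : prime_on R B -> in_angle R B v -> B g ->
  in_Xalpha R B g v -> False.
Proof.
  intros hB hA hg hX; rewrite in_angle_iff in hA; rewrite in_Xalpha_iff in hX; auto.
  destruct hA as [hv hA]; destruct hX as [_ hX].
  destruct (three_points_pair_except B g (proj1 hB)) as [a [b [ha [hb [hab [hag hbg]]]]]].
  apply (nontrivial_module_not_prime B (fun x => B x /\ x <> g) a b g hB); auto; [|tauto].
  apply is_module_of_rep; [tauto|].
  intros w hw hnw; assert (w = g) as -> by (apply NNPP; intro; apply hnw; auto).
  exists a; intros m [hm hmg].
  apply (indist_swap v); auto using indist_sym.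
Qed.

Lemma Xalpha_unique B v g g' : prime_on R B -> B g -> B g' ->
  in_Xalpha R B g v -> in_Xalpha R B g' v -> g = g'.
Proof.
  intros hB hg hg' hX hX'; rewrite in_Xalpha_iff in hX, hX'; auto.
  destruct hX as [hv hX]; destruct hX' as [_ hX'].
  apply NNPP; intro ne.
  destruct (three_points_except2 B g g' (proj1 hB)) as [c [hc [hcg hcg']]].
  apply (nontrivial_module_not_prime B (fun x => x = g \/ x = g') g g' c hB); auto;
    [|intros [->| ->]; auto].
  apply is_module_of_rep; [intros x [->| ->]; auto|].
  intros w hw hnw; exists v; intros m [->| ->]; [apply hX|apply hX']; auto.
Qed.

Lemma prime_addv_not_angle B v : three_points B -> prime_on R (addv B v) ->
  in_angle R B v -> False.
Proof.
  intros h3 hp [hv [_ hA]].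
  destruct (three_points_pair_except B v h3) as [a [b [ha [hb [hab _]]]]].
  apply (nontrivial_module_not_prime (addv B v) B a b v hp); auto; [split; auto|];
    unfold addv; auto.
Qed.

Lemma prime_addv_not_Xalpha B v g : three_points B -> B g -> prime_on R (addv B v) ->
  in_Xalpha R B g v -> False.
Proof.
  intros h3 hg hp [hv hM].
  destruct (three_points_except2 B g g h3) as [c [hc [hcg _]]].
  apply (nontrivial_module_not_prime (addv B v) (fun u => u = g \/ u = v) g v c hp);
    unfold addv; auto.
  - intros ->; contradiction.
  - intros [->| ->]; auto.
Qed.

Lemma twin_swap_module W a c M : ~ W a -> ~ W c -> twins W a c ->
  is_module R (addv W c) M ->
  is_module R (addv W a) (fun x => (M x /\ x <> c) \/ (x = a /\ M c)).
Proof.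
  intros ha hc htw [hMW hM].
  assert (hinW : forall x, M x -> x <> c -> W x) by (intros x mx nx; destruct (hMW x mx); tauto).
  split; [intros x [[mx nx]|[-> _]]; unfold addv; [left; apply hinW|right]; auto|].
  intros x y v hx hy hv hnv; change (indist v x y); destruct hv as [wv| ->].
  - assert (nmv : ~ M v) by (intro mv; apply hnv; left; split; auto; intros ->; contradiction).
    assert (rep : forall z, (M z /\ z <> c) \/ (z = a /\ M c) ->
      exists z', M z' /\ indist v z z').
    { intros z [[mz _]|[-> mc]]; [exists z|exists c]; split; auto.
      apply indist_refl; intros ->; contradiction. }
    destruct (rep x hx) as [x' [mx' hx']], (rep y hy) as [y' [my' hy']].
    apply (indist_trans v x x' y); auto.
    apply (indist_trans v x' y' y); [apply hM; unfold addv; auto|apply indist_sym; auto].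
  - assert (nmc : ~ M c) by (intro mc; apply hnv; right; auto).
    destruct hx as [[mx nx]|[_ mc]]; [|contradiction].
    destruct hy as [[my ny]|[_ mc]]; [|contradiction].
    apply (indist_swap c); try (apply indist_sym, htw, hinW; auto).
    apply hM; unfold addv; auto.
Qed.

Lemma prime_on_twin_swap W a c : ~ W a -> ~ W c -> a <> c -> twins W a c ->
  prime_on R (addv W a) -> prime_on R (addv W c).
Proof.
  intros ha hc hac htw [h3 hp]; split.
  - destruct (three_points_pair_except _ a h3) as [x [y [[hx|] [[hy|] [hxy [hxa hya]]]]]];
      try contradiction.
    exists x, y, c; unfold addv; repeat split; auto; intros ->; contradiction.
  - intros M hM.
    assert (hinW : forall x, M x -> x <> c -> W x)
      by (intros x mx nx; destruct (proj1 hM x mx); tauto).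
    destruct (hp _ (twin_swap_module W a c M ha hc htw hM)) as [h|[h|[d h]]].
    + left; intros x mx; destruct (classic (x = c)) as [->|nx]; [apply (h a)|apply (h x)]; auto.
    + right; left; intro x; split; [apply hM|]; intros [wx| ->].
      * destruct (proj2 (h x) (or_introl wx)) as [[mx _]|[-> _]]; [exact mx|contradiction].
      * destruct (proj2 (h a) (or_intror eq_refl)) as [[ma _]|[_ mc]]; [|exact mc].
        destruct (proj1 hM a ma); contradiction.
    + right; right; destruct (classic (M c)) as [mc|nmc].
      * exists c; intro x; split; [|intros ->; auto].
        intro mx; apply NNPP; intro nx.
        assert (x = d) as -> by (apply h; left; auto).
        assert (a = d) as -> by (apply h; right; auto).
        apply ha, hinW; auto.
      * exists d; intro x; split.
        -- intro mx; apply h; left; split; auto; intros ->; contradiction.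
        -- intro e; destruct (proj2 (h x) e) as [[mx _]|[_ mc]]; [exact mx|contradiction].
Qed.

(* [absorbed B p o] reads: o ∈ ⟨B ∪ {p}⟩, or o ∈ (B ∪ {p})(g) for some g ∈ B. *)
Definition absorbed B p o :=
  (in_angle R B o /\ forall x, B x -> indist o p x) \/
  (exists g, B g /\ in_Xalpha R B g o /\ indist p g o).

Lemma absorbed_of_sub B C p o : (forall x, B x -> C x) -> C p -> ~ B p ->
  (in_angle R C o \/ exists g, B g /\ in_Xalpha R C g o) -> absorbed B p o.
Proof.
  intros hBC hp hBp [hA|[g [hg hX]]].
  - left; split; [exact (in_angle_sub B C o hBC hA)|].
    rewrite in_angle_iff in hA; intros x hx; apply hA; auto.
  - right; exists g; split; auto; split; [exact (in_Xalpha_sub B C g o hBC hg hX)|].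
    rewrite in_Xalpha_iff in hX; auto; apply hX; auto; intros ->; contradiction.
Qed.

Lemma add2_cases B p o : prime_on R (addv B p) -> ~ B p -> ~ B o -> o <> p ->
  prime_on R (add2 B p o) \/ absorbed B p o \/ twins B p o.
Proof.
  intros hp hBp hBo hop.
  assert (hsub : forall x, B x -> addv B p x) by (unfold addv; auto).
  assert (hpp : addv B p p) by (unfold addv; auto).
  destruct (addv_cases (addv B p) o hp) as [h|[h|[g [[hg| ->] h]]]];
    [unfold addv; tauto|left; exact h| | |].
  - right; left; apply (absorbed_of_sub B (addv B p)); auto.
  - right; left; apply (absorbed_of_sub B (addv B p)); eauto.
  - right; right; rewrite in_Xalpha_iff in h; auto.
    intros x hx; apply h; auto; intros ->; contradiction.
Qed.

Lemma add2_not_prime_cases B p o : prime_on R B -> ~ B p -> ~ B o -> p <> o ->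
  ~ prime_on R (add2 B p o) ->
  twins B p o \/ (in_angle R B p /\ in_angle R B o) \/
  (exists g, B g /\ in_Xalpha R B g p /\ in_Xalpha R B g o) \/
  absorbed B p o \/ absorbed B o p.
Proof.
  intros hB hp ho hpo hn.
  assert (h3 : three_points (add2 B p o)).
  { apply (three_points_sub B); [unfold add2, addv; tauto|apply hB]. }
  destruct (not_prime_module _ h3 hn) as [M [hM hnt]].
  pose proof (proj2 hM) as hind.
  assert (hBW : forall x, B x -> add2 B p o x) by (unfold add2, addv; tauto).
  assert (wp : add2 B p o p) by (unfold add2, addv; tauto).
  assert (wo : add2 B p o o) by (unfold add2, addv; tauto).
  assert (hsub : forall x, M x -> B x \/ x = p \/ x = o).
  { intros x mx; generalize (proj1 hM x mx); unfold add2, addv; tauto. }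
  assert (single : forall a, M a -> (forall x, M x -> x = a) -> False).
  { intros a ma h; apply hnt; right; right; exists a; intro x; split; [apply h|intros ->; auto]. }
  assert (angle : (forall x, B x -> M x) ->
    forall v, add2 B p o v -> ~ B v -> ~ M v -> in_angle R B v).
  { intros h v wv hv nmv; rewrite in_angle_iff; split; auto; intros x y hx hy; apply hind; auto. }
  assert (xalpha : forall g, B g -> M g -> (forall x, B x -> M x -> x = g) ->
    forall v, ~ B v -> M v -> in_Xalpha R B g v).
  { intros g hg hMg hu v hv mv; rewrite in_Xalpha_iff; auto; split; auto; intros x hx hxg.
    apply hind; auto; intro mx; apply hxg, hu; auto. }
  destruct (prime_module_trace B _ M hB hM hBW) as [h|[h|[g [hg [hMg hu]]]]];
    destruct (classic (M p)) as [mp|nmp]; destruct (classic (M o)) as [mo|nmo].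
  - left; intros y hy; apply hind; auto.
  - exfalso; apply (single p mp); intros x mx.
    destruct (hsub x mx) as [bx|[->| ->]]; [destruct (h x bx mx)|auto|contradiction].
  - exfalso; apply (single o mo); intros x mx.
    destruct (hsub x mx) as [bx|[->| ->]]; [destruct (h x bx mx)|contradiction|auto].
  - exfalso; apply hnt; left; intros x mx.
    destruct (hsub x mx) as [bx|[->| ->]]; [exact (h x bx mx)|contradiction..].
  - exfalso; apply hnt; right; left; intro x; split; [apply hM|].
    intros [[bx| ->]| ->]; auto.
  - right; right; right; left; left; split; auto; intros x hx; apply hind; auto.
  - right; right; right; right; left; split; auto; intros x hx; apply hind; auto.
  - right; left; auto.
  - right; right; left; exists g; auto.
  - right; right; right; right; right; exists g; split; auto; split; auto; apply hind; auto.
  - right; right; right; left; right; exists g; split; auto; split; auto; apply hind; auto.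
  - exfalso; apply (single g hMg); intros x mx.
    destruct (hsub x mx) as [bx|[->| ->]]; [apply hu|contradiction..]; auto.
Qed.

Section PrimeBase.
Variable B : T -> Prop.
Hypothesis HB : prime_on R B.

Lemma prime_inhabited : exists x, B x.
Proof. destruct (proj1 HB) as [a [_ [_ [ha _]]]]; exists a; exact ha. Qed.

Lemma absorbed_by_twins_indist p q o : twins B p q ->
  absorbed B p o -> absorbed B q o -> indist o p q.
Proof.
  intros htw [[hA hp]|[g [hg [hX hp]]]] [[hA' hq]|[g' [hg' [hX' hq]]]].
  - destruct prime_inhabited as [x hx].
    apply (indist_trans o p x q); [|apply indist_sym]; auto.
  - destruct (angle_Xalpha_disjoint B o g' HB hA hg' hX').
  - destruct (angle_Xalpha_disjoint B o g HB hA' hg hX).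
  - assert (g' = g) as -> by (apply (Xalpha_unique B o); auto).
    apply (indist_swap g); auto.
Qed.

Lemma twins_absorbed_indist p q o : twins B p q -> ~ B q ->
  absorbed B o p -> absorbed B o q -> indist o p q.
Proof.
  intros htw hq [[hA hp]|[g [hg [hX hp]]]] [[hA' hq']|[g' [hg' [hX' hq']]]].
  - destruct prime_inhabited as [x hx].
    apply (indist_swap x); auto using indist_sym.
  - destruct (angle_Xalpha_disjoint B q g' HB (in_angle_twins B p q hA htw hq) hg' hX').
  - destruct (angle_Xalpha_disjoint B p g HB (in_angle_twins B q p hA' (twins_sym B p q htw)
      ltac:(apply hX)) hg hX).
  - assert (g' = g) as ->.
    { apply (Xalpha_unique B q); auto; apply (in_Xalpha_twins B g p q); auto. }
    apply (indist_trans o p g q); [apply indist_sym|]; auto.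
Qed.

Lemma angle_pair_cases o m : in_angle R B o -> ~ B m -> o <> m ->
  ~ prime_on R (add2 B o m) -> in_angle R B m \/ forall y, B y -> indist o m y.
Proof.
  intros hA hm hom hn; pose proof hA as [ho _]; pose proof hA as hA'.
  rewrite in_angle_iff in hA'; destruct hA' as [_ hA'].
  destruct (add2_not_prime_cases B o m HB ho hm hom hn)
    as [htw|[[_ h]|[[g [hg [h _]]]|[[[h _]|[g [hg [h hn']]]]|[[_ h]|[g [hg [h _]]]]]]]].
  - left; apply (in_angle_twins B o m); auto.
  - left; exact h.
  - destruct (angle_Xalpha_disjoint B o g HB hA hg h).
  - left; exact h.
  - right; intros y hy; apply (indist_trans o m g y); [apply indist_sym|apply hA']; auto.
  - right; exact h.
  - destruct (angle_Xalpha_disjoint B o g HB hA hg h).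
Qed.

Lemma Xalpha_pair_cases g m o : B g -> in_Xalpha R B g m -> ~ B o -> m <> o ->
  ~ prime_on R (add2 B m o) -> in_Xalpha R B g o \/ indist o m g.
Proof.
  intros hg hX ho hmo hn; pose proof hX as [hm _].
  destruct (add2_not_prime_cases B m o HB hm ho hmo hn)
    as [htw|[[h _]|[[g' [hg' [h h']]]|[[[_ h']|[g' [hg' [h hn']]]]|[[h _]|[g' [hg' [h hn']]]]]]]].
  - left; apply (in_Xalpha_twins B g m); auto.
  - destruct (angle_Xalpha_disjoint B m g HB h hg hX).
  - left; replace g with g'; auto; apply (Xalpha_unique B m); auto.
  - right; apply h'; exact hg.
  - destruct (classic (g' = g)) as [->|ne]; [left; exact h|right].
    rewrite in_Xalpha_iff in hX, h; auto; destruct hX as [_ hX]; destruct h as [_ h].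
    destruct hn' as [n1 n2], (hX g' hg' ne) as [x1 x2], (h g hg (not_eq_sym ne)) as [y1 y2].
    split; eapply R_trans; [apply R_sym, n2| |apply R_sym, n1|];
      (eapply R_trans; [apply R_sym; eassumption|eassumption]).
  - destruct (angle_Xalpha_disjoint B m g HB h hg hX).
  - right; apply indist_sym; replace g with g'; auto; apply (Xalpha_unique B m); auto.
Qed.

End PrimeBase.

Section PrimePairExtension.
Hypothesis Hsig : prime_on R (fun _ => True).
Variable B : T -> Prop.
Hypothesis HB : prime_on R B.
Hypothesis Hno : forall a b, ~ B a -> ~ B b -> a <> b -> ~ prime_on R (add2 B a b).

Lemma prime_addv_twins p q : ~ B p -> ~ B q -> p <> q ->
  prime_on R (addv B p) -> prime_on R (addv B q) -> twins B p q.
Proof.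
  intros hp hq hpq hpe hqe.
  destruct (add2_cases B p q hpe hp hq (not_eq_sym hpq)) as [h|[[[h _]|[g [hg [h _]]]]|h]].
  - destruct (Hno p q hp hq hpq h).
  - destruct (prime_addv_not_angle B q (proj1 HB) hqe h).
  - destruct (prime_addv_not_Xalpha B q g (proj1 HB) hg hqe h).
  - exact h.
Qed.

Lemma prime_addv_absorbed p o : ~ B p -> prime_on R (addv B p) ->
  ~ B o -> ~ prime_on R (addv B o) -> o <> p -> absorbed B p o.
Proof.
  intros hp hpe ho hoe hop.
  destruct (add2_cases B p o hpe hp ho hop) as [h|[h|h]]; [|exact h|].
  - destruct (Hno p o hp ho (not_eq_sym hop) h).
  - destruct (hoe (prime_on_twin_swap B p o hp ho (not_eq_sym hop) h hpe)).
Qed.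

Lemma prime_addv_unique u u' : ~ B u -> prime_on R (addv B u) ->
  ~ B u' -> prime_on R (addv B u') -> u = u'.
Proof.
  intros hu hue hu' hue'; apply NNPP; intro ne.
  destruct (prime_inhabited B HB) as [y0 hy0].
  apply (nontrivial_module_not_prime _ (fun v => ~ B v /\ prime_on R (addv B v)) u u' y0 Hsig);
    auto; [|tauto].
  split; auto; intros p q o [hp hpe] [hq hqe] _ hno; change (indist o p q).
  destruct (classic (p = q)) as [<-|npq]; [apply indist_refl; intros ->; tauto|].
  assert (htw := prime_addv_twins p q hp hq npq hpe hqe).
  destruct (classic (B o)) as [bo|nbo]; [apply htw, bo|].
  assert (hoe : ~ prime_on R (addv B o)) by tauto.
  apply (absorbed_by_twins_indist B HB p q o htw); apply prime_addv_absorbed; auto;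
    intros ->; tauto.
Qed.

Lemma prime_no_angle w : ~ in_angle R B w.
Proof.
  intro hw.
  destruct (proj1 HB) as [y0 [y1 [_ [hy0 [hy1 [_ [n01 _]]]]]]].
  apply (nontrivial_module_not_prime _ (fun m => ~ in_angle R B m) y0 y1 w Hsig);
    auto; try (intros [h _]; contradiction).
  apply is_module_of_rep; auto; intros o _ hno.
  assert (ho : in_angle R B o) by (apply NNPP; auto).
  exists y0; intros m hm; destruct (classic (B m)) as [bm|nbm].
  - apply (proj1 (in_angle_iff B o) ho); auto.
  - assert (om : o <> m) by (intros ->; contradiction).
    destruct (angle_pair_cases B HB o m ho nbm om (Hno o m (proj1 ho) nbm om)) as [h|h];
      [contradiction|auto].
Qed.

Lemma prime_no_Xalpha g z : B g -> ~ in_Xalpha R B g z.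
Proof.
  intros hg hz.
  destruct (three_points_except2 B g g (proj1 HB)) as [c [hc [hcg _]]].
  assert (zg : z <> g) by (intros ->; destruct hz; contradiction).
  apply (nontrivial_module_not_prime _ (fun m => m = g \/ in_Xalpha R B g m) g z c Hsig);
    auto; [|intros [->|[h _]]; contradiction].
  apply is_module_of_rep; auto; intros o _ hno.
  assert (og : o <> g) by tauto; assert (nxo : ~ in_Xalpha R B g o) by tauto.
  exists g; intros m [->|hm]; [apply indist_refl; auto|].
  assert (nbm : ~ B m) by apply hm.
  assert (mo : m <> o) by (intros ->; contradiction).
  destruct (classic (B o)) as [bo|nbo].
  - apply indist_sym, (proj1 (in_Xalpha_iff B g m hg) hm); auto.
  - destruct (Xalpha_pair_cases B HB g m o hg hm nbo mo (Hno m o nbm nbo mo)) as [h|h];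
      [contradiction|exact h].
Qed.

End PrimePairExtension.

Lemma prime_pair_extension B a0 b0 : prime_on R (fun _ => True) -> prime_on R B ->
  ~ B a0 -> ~ B b0 -> a0 <> b0 ->
  exists a b, ~ B a /\ ~ B b /\ a <> b /\ prime_on R (add2 B a b).
Proof.
  intros Hsig hB ha0 hb0 hab0; apply NNPP; intro hno.
  assert (Hno : forall a b, ~ B a -> ~ B b -> a <> b -> ~ prime_on R (add2 B a b))
    by (intros a b ha hb ne hp; apply hno; exists a, b; auto).
  destruct (addv_cases B a0 hB ha0) as [e1|[e1|[g1 [hg1 e1]]]];
    [| destruct (prime_no_angle Hsig B hB Hno a0 e1)
     | destruct (prime_no_Xalpha Hsig B hB Hno g1 a0 hg1 e1)].
  destruct (addv_cases B b0 hB hb0) as [e2|[e2|[g2 [hg2 e2]]]].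
  - exact (hab0 (prime_addv_unique Hsig B hB Hno a0 b0 ha0 e1 hb0 e2)).
  - destruct (prime_no_angle Hsig B hB Hno b0 e2).
  - destruct (prime_no_Xalpha Hsig B hB Hno g2 b0 hg2 e2).
Qed.

Definition removable_pair (X : T -> Prop) :=
  exists v w, ~ X v /\ ~ X w /\ v <> w /\ prime_on R (fun u => u <> v /\ u <> w).

Section NoSmallPrimeExtension.
Hypothesis Hsig : prime_on R (fun _ => True).
Variable X : T -> Prop.
Hypothesis HX : prime_on R X.
Hypothesis NoSingle : forall v, ~ X v -> ~ prime_on R (addv X v).
Hypothesis NoTriple : forall a b c, ~ X a -> ~ X b -> a <> b -> prime_on R (add2 X a b) ->
  ~ X c -> c <> a -> c <> b -> ~ prime_on R (addv (add2 X a b) c).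

Definition prime_pair a b := ~ X a /\ ~ X b /\ a <> b /\ prime_on R (add2 X a b).

Lemma prime_pair_sym a b : prime_pair a b -> prime_pair b a.
Proof.
  intros [ha [hb [hab hp]]]; refine (conj hb (conj ha (conj (not_eq_sym hab) _))).
  apply (prime_on_ext (add2 X a b)); auto; unfold add2, addv; tauto.
Qed.

Lemma prime_pair_outside a b : prime_pair a b -> forall x, X x -> x <> a /\ x <> b.
Proof. intros [ha [hb _]] x hx; split; intros ->; contradiction. Qed.

Lemma prime_pair_irrefl a : ~ prime_pair a a.
Proof. intros [_ [_ [h _]]]; apply h; reflexivity. Qed.

Lemma twins_not_prime_pair a b : twins X a b -> ~ prime_pair a b.
Proof.
  intros htw [ha [hb [hab hp]]]; destruct (prime_inhabited X HX) as [x hx].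
  exact (twins_not_prime X a b x hx ha hb hab htw hp).
Qed.

Lemma prime_pair_of_twins p w o : prime_pair p w -> twins (addv X p) w o ->
  ~ X o -> o <> p -> o <> w -> prime_pair o p.
Proof.
  intros [hp [hw [hpw hpr]]] htw ho hop how; refine (conj ho (conj hp (conj hop _))).
  apply (prime_on_ext (addv (addv X p) o)); [unfold add2, addv; tauto|].
  apply (prime_on_twin_swap (addv X p) w o); unfold addv in *; auto; try tauto.
  intros [hx| ->]; auto.
Qed.

Lemma common_neighbour_twins a b c : prime_pair a b -> prime_pair c b -> c <> a ->
  twins (addv X b) a c.
Proof.
  intros hab hcb hca; pose proof hab as [ha [hb [nab pab]]]; pose proof hcb as [hc [_ [ncb pcb]]].
  assert (h3 : three_points (addv X b))
    by (apply (three_points_sub X); [unfold addv|apply HX]; auto).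
  assert (pba : prime_on R (addv (addv X b) a)) by (apply prime_pair_sym in hab; apply hab).
  assert (pbc : prime_on R (addv (addv X b) c)) by (apply prime_pair_sym in hcb; apply hcb).
  destruct (add2_cases (addv X b) a c pba) as [h|[[[h _]|[g [hg [h _]]]]|h]];
    unfold addv; try tauto.
  - destruct (NoTriple a b c ha hb nab pab hc hca ncb).
    apply (prime_on_ext (add2 (addv X b) a c)); [unfold add2, addv; tauto|exact h].
  - destruct (prime_addv_not_angle _ c h3 pbc h).
  - destruct (prime_addv_not_Xalpha _ c g h3 hg pbc h).
Qed.

Lemma non_neighbour_cases p w o : prime_pair p w -> ~ X o -> o <> p -> o <> w ->
  ~ prime_pair o p -> ~ prime_pair o w ->
  in_angle R (add2 X p w) o \/ exists g, X g /\ in_Xalpha R (add2 X p w) g o.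
Proof.
  intros hpw ho hop how nop now; pose proof hpw as [hp [hw [npw ppw]]].
  assert (hno : ~ add2 X p w o) by (unfold add2, addv; tauto).
  destruct (addv_cases (add2 X p w) o ppw hno) as [h|[h|[g [hg h]]]].
  - destruct (NoTriple p w o hp hw npw ppw ho hop how h).
  - left; exact h.
  - rewrite in_Xalpha_iff in h; [destruct h as [_ h]|exact hg].
    destruct hg as [[hg|e]|e].
    + right; exists g; split; auto; rewrite in_Xalpha_iff; unfold add2, addv in *; auto.
    + exfalso; subst g; apply now, (prime_pair_of_twins w p o); auto using prime_pair_sym.
      intros x hx; apply h; unfold add2, addv in *; [tauto|].
      intros ->; destruct hx; contradiction.
    + exfalso; subst g; apply nop, (prime_pair_of_twins p w o); auto.
      intros x hx; apply h; unfold add2, addv in *; [tauto|].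
      intros ->; destruct hx; [contradiction|auto].
Qed.

Lemma non_neighbour_absorbed p w o : prime_pair p w -> ~ X o -> o <> p -> o <> w ->
  ~ prime_pair o p -> ~ prime_pair o w -> absorbed X p o.
Proof.
  intros hpw ho hop how nop now.
  apply (absorbed_of_sub X (add2 X p w)); [unfold add2, addv; auto..|apply hpw|].
  apply (non_neighbour_cases p w); auto.
Qed.

Lemma indist_of_same_neighbours p q w o : p <> q -> ~ X p -> ~ X q ->
  (forall r, prime_pair r p <-> prime_pair r q) -> prime_pair w p ->
  ~ X o -> o <> p -> o <> q -> ~ (forall r, prime_pair r o <-> prime_pair r p) ->
  indist o p q.
Proof.
  intros pq hp hq hpq hwp ho op oq hop.
  assert (hwq : prime_pair w q) by (apply hpq, hwp).
  assert (htw : twins X p q).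
  { apply (twins_sub X (addv X w)); [unfold addv; auto|].
    apply common_neighbour_twins; auto using prime_pair_sym. }
  destruct (classic (prime_pair o p)) as [aop|naop].
  - apply (common_neighbour_twins p o q); auto using prime_pair_sym.
    + apply prime_pair_sym, hpq, aop.
    + unfold addv; auto.
  - assert (naoq : ~ prime_pair o q) by (rewrite <- hpq; exact naop).
    destruct (classic (exists w', prime_pair w' p /\ ~ prime_pair o w')) as [[w' [h1 h2]]|hno].
    + assert (ow' : o <> w') by (intros ->; contradiction).
      apply (absorbed_by_twins_indist X HX p q o htw);
        apply (non_neighbour_absorbed _ w'); auto using prime_pair_sym.
      apply prime_pair_sym, hpq, h1.
    + assert (hex : exists w', prime_pair w' o /\ ~ prime_pair w' p).
      { apply NNPP; intro hn; apply hop; intro r; split; intro h.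
        - apply NNPP; intro h'; apply hn; exists r; auto.
        - apply prime_pair_sym, NNPP; intro h'; apply hno; exists r; auto. }
      destruct hex as [w' [hw'o hw'p]].
      assert (hw'q : ~ prime_pair w' q) by (rewrite <- hpq; exact hw'p).
      assert (pw' : p <> w') by (intros ->; apply naop, prime_pair_sym, hw'o).
      assert (qw' : q <> w') by (intros ->; apply naoq, prime_pair_sym, hw'o).
      apply (twins_absorbed_indist X HX p q o htw hq);
        apply (non_neighbour_absorbed _ w'); auto using prime_pair_sym;
        intro h; apply prime_pair_sym in h; contradiction.
Qed.

Lemma same_neighbours_eq y z : ~ X y -> ~ X z ->
  (forall r, prime_pair r y <-> prime_pair r z) -> (exists w, prime_pair w y) -> y = z.
Proof.
  intros hy hz hyz [w hw]; apply NNPP; intro ne.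
  destruct (prime_inhabited X HX) as [x0 hx0].
  set (S := fun v => ~ X v /\ forall r, prime_pair r v <-> prime_pair r y).
  apply (nontrivial_module_not_prime _ S y z x0 Hsig); auto.
  - split; auto; intros p q o [hp Sp] [hq Sq] _ ho; change (indist o p q).
    assert (op : o <> p) by (intros ->; apply ho; split; auto).
    assert (oq : o <> q) by (intros ->; apply ho; split; auto).
    destruct (classic (p = q)) as [<-|npq]; [apply indist_refl; auto|].
    assert (hwp : prime_pair w p) by (apply Sp, hw).
    destruct (classic (X o)) as [xo|nxo].
    + apply (common_neighbour_twins p w q); auto using prime_pair_sym;
        [apply prime_pair_sym, Sq, hw|unfold addv; auto].
    + apply (indist_of_same_neighbours p q w o); auto;
        [intro r; rewrite Sp, Sq; tauto|].
      intro h; apply ho; split; auto; intro r; rewrite h; apply Sp.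
  - split; auto; intro r; tauto.
  - split; auto; intro r; rewrite hyz; tauto.
  - intros [h _]; contradiction.
Qed.

Definition isolated v := forall r, ~ prime_pair r v.

Lemma angle_not_isolated v : in_angle R X v -> ~ isolated v.
Proof.
  intros hv hiso.
  set (Iso := fun z => in_angle R X z /\ isolated z).
  destruct (proj1 HX) as [x [y [_ [hx [hy [_ [hxy _]]]]]]].
  destruct (prime_inhabited X HX) as [x0 hx0].
  apply (nontrivial_module_not_prime _ (fun m => ~ Iso m) x y v Hsig); auto;
    [| intros [[h _] _]; contradiction..| intro h; apply h; split; auto].
  apply is_module_of_rep; auto; intros o _ hno.
  assert (hIo : Iso o) by (apply NNPP; auto); destruct hIo as [ango isoo].
  assert (nxo : ~ X o) by apply ango.
  exists x0; intros m hm; destruct (classic (X m)) as [xm|nxm].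
  - apply (proj1 (in_angle_iff X o) ango); auto.
  - assert (mo : o <> m) by (intros ->; apply hm; split; auto).
    destruct (classic (exists w, prime_pair w m)) as [[w hw]|hnw].
    + assert (ow : o <> w) by (intros ->; apply (isoo m), prime_pair_sym, hw).
      destruct (non_neighbour_absorbed m w o (prime_pair_sym _ _ hw) nxo mo ow)
        as [[_ h]|[g [hg [xg _]]]]; [intro h; exact (isoo _ (prime_pair_sym _ _ h))..| |].
      * apply h; auto.
      * destruct (angle_Xalpha_disjoint X o g HX ango hg xg).
    + assert (npr : ~ prime_on R (add2 X o m)).
      { intro hp; exact (isoo m (prime_pair_sym o m (conj nxo (conj nxm (conj mo hp))))). }
      destruct (angle_pair_cases X HX o m ango nxm mo npr) as [h|h]; [|apply h; auto].
      exfalso; apply hm; split; auto; intros r hr; apply hnw; exists r; auto.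
Qed.

Lemma Xalpha_not_isolated al v : X al -> in_Xalpha R X al v -> ~ isolated v.
Proof.
  intros hal hv hiso.
  set (Iso := fun z => in_Xalpha R X al z /\ isolated z).
  destruct (three_points_except2 X al al (proj1 HX)) as [c [hc [hcal _]]].
  assert (val : al <> v) by (intros ->; destruct hv; contradiction).
  apply (nontrivial_module_not_prime _ (fun m => m = al \/ Iso m) al v c Hsig); auto;
    [| right; split; auto | intros [->|[[h _] _]]; contradiction].
  apply is_module_of_rep; auto; intros o _ hno.
  assert (oal : o <> al) by tauto; assert (nIo : ~ Iso o) by tauto.
  exists al; intros m [->|[xm isom]]; [apply indist_refl; auto|].
  assert (nxm : ~ X m) by apply xm.
  destruct (classic (X o)) as [xo|nxo].
  - apply indist_sym, (proj1 (in_Xalpha_iff X al m hal) xm); auto.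
  - assert (mo : m <> o) by (intros ->; apply nIo; split; auto).
    destruct (classic (exists w, prime_pair w o)) as [[w hw]|hnw].
    + assert (mw : m <> w) by (intros ->; exact (isom o (prime_pair_sym _ _ hw))).
      destruct (non_neighbour_absorbed o w m (prime_pair_sym _ _ hw) nxm mo mw)
        as [[ang _]|[g [hg [xg hg']]]]; [intro h; exact (isom _ (prime_pair_sym _ _ h))..| |].
      * destruct (angle_Xalpha_disjoint X m al HX ang hal xm).
      * assert (g = al) as -> by (apply (Xalpha_unique X m); auto).
        apply indist_sym, hg'.
    + assert (npr : ~ prime_on R (add2 X m o)).
      { intro hp; exact (isom o (prime_pair_sym m o (conj nxm (conj nxo (conj mo hp))))). }
      destruct (Xalpha_pair_cases X HX al m o hal xm nxo mo npr) as [h|h]; [|exact h].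
      exfalso; apply nIo; split; auto; intros r hr; apply hnw; exists r; auto.
Qed.

Lemma exists_prime_pair v : ~ X v -> exists w, prime_pair w v.
Proof.
  intros hv; apply NNPP; intro hn.
  assert (hiso : isolated v) by (intros r h; apply hn; exists r; auto).
  destruct (addv_cases X v HX hv) as [h|[h|[al [hal h]]]].
  - exact (NoSingle v hv h).
  - exact (angle_not_isolated v h hiso).
  - exact (Xalpha_not_isolated al v hal h hiso).
Qed.

Section IsolatedPair.
Variables a b : T.
Hypothesis Hab : prime_pair a b.
Hypothesis Hiso : forall c, ~ X c -> c <> a -> c <> b -> ~ prime_pair c a /\ ~ prime_pair c b.
Variable M : T -> Prop.
Hypothesis HM : is_module R (fun u => u <> a /\ u <> b) M.

Lemma isolated_pair_absorbs o m : (o = a \/ o = b) -> ~ X m -> m <> a -> m <> b ->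
  absorbed X o m.
Proof.
  intros hab hm ma mb; destruct (Hiso m hm ma mb) as [n1 n2].
  destruct hab as [->| ->]; [apply (non_neighbour_absorbed a b)|apply (non_neighbour_absorbed b a)];
    auto using prime_pair_sym.
Qed.

Lemma isolated_pair_module_disjoint : (forall x, X x -> ~ M x) ->
  trivial_in (fun u => u <> a /\ u <> b) M.
Proof.
  intros h.
  destruct (classic (exists p q, M p /\ M q /\ p <> q)) as [[p [q [mp [mq pq]]]]|hno].
  - exfalso; destruct (prime_inhabited X HX) as [x0 hx0].
    refine (nontrivial_module_not_prime _ M p q x0 Hsig _ mp mq pq I (h x0 hx0)).
    split; auto; intros p' q' o mp' mq' _ hno; change (indist o p' q').
    destruct (classic (o = a \/ o = b)) as [oab|oS]; [|apply HM; auto; tauto].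
    destruct (classic (p' = q')) as [<-|ne]; [apply indist_refl; intros ->; contradiction|].
    assert (htw : twins X p' q').
    { intros x hx; apply HM; auto.
      destruct Hab as [ha [hb _]]; split; intros ->; contradiction. }
    assert (np' : ~ X p') by (intro hx; exact (h p' hx mp')).
    assert (nq' : ~ X q') by (intro hx; exact (h q' hx mq')).
    destruct (proj1 HM p' mp'), (proj1 HM q' mq').
    apply (twins_absorbed_indist X HX p' q' o htw nq'); apply isolated_pair_absorbs; auto.
  - destruct (classic (exists p, M p)) as [[p mp]|hne]; [right; right; exists p|left].
    + intro x; split; [|intros ->; auto].
      intro mx; apply NNPP; intro ne; apply hno; exists x, p; auto.
    + intros x mx; apply hne; exists x; auto.
Qed.

Lemma isolated_pair_module_cover : (forall x, X x -> M x) ->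
  trivial_in (fun u => u <> a /\ u <> b) M.
Proof.
  intros h.
  destruct (classic (forall z, z <> a /\ z <> b -> M z)) as [hall|hnall];
    [right; left; intro x; split; [apply HM|apply hall]|exfalso].
  destruct (not_all_ex_not _ _ hnall) as [c hc].
  assert (cS : c <> a /\ c <> b) by tauto; assert (nmc : ~ M c) by tauto.
  destruct (proj1 HX) as [x [y [_ [hx [hy [_ [hxy _]]]]]]].
  destruct (prime_inhabited X HX) as [x0 hx0].
  refine (nontrivial_module_not_prime _ (fun v => M v \/ v = a \/ v = b) x y c Hsig _
    (or_introl (h x hx)) (or_introl (h y hy)) hxy I _); [|intros [hm|[->| ->]]; tauto].
  apply is_module_of_rep; auto; intros o _ hno.
  assert (oS : o <> a /\ o <> b) by (split; intros ->; tauto).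
  assert (nmo : ~ M o) by tauto.
  assert (nxo : ~ X o) by (intro hxo; exact (nmo (h o hxo))).
  assert (ango : in_angle R X o).
  { rewrite in_angle_iff; split; auto; intros x' y' hx' hy'; apply HM; auto. }
  exists x0; intros m [mm|hm]; [apply HM; auto|].
  destruct (isolated_pair_absorbs m o hm nxo (proj1 oS) (proj2 oS)) as [[_ h']|[g [hg [xg _]]]].
  - apply h'; auto.
  - destruct (angle_Xalpha_disjoint X o g HX ango hg xg).
Qed.

Lemma isolated_pair_module_single g : X g -> M g -> (forall x, X x -> M x -> x = g) ->
  trivial_in (fun u => u <> a /\ u <> b) M.
Proof.
  intros hg hMg hu.
  destruct (classic (forall z, M z -> z = g)) as [hall|hnall];
    [right; right; exists g; intro x; split; [apply hall|intros ->; auto]|exfalso].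
  destruct (not_all_ex_not _ _ hnall) as [m0 hm0].
  assert (mm0 : M m0) by tauto; assert (m0g : m0 <> g) by tauto.
  destruct (three_points_except2 X g g (proj1 HX)) as [c [hc [hcg _]]].
  refine (nontrivial_module_not_prime _ M g m0 c Hsig _ hMg mm0 (not_eq_sym m0g) I _);
    [|intro mc; exact (hcg (hu c hc mc))].
  pose proof (prime_pair_outside a b Hab) as XS.
  assert (Xam : forall m, M m -> m <> g -> in_Xalpha R X g m).
  { intros m mm mg; assert (nxm : ~ X m) by (intro hx; exact (mg (hu m hx mm))).
    rewrite in_Xalpha_iff; auto; split; auto; intros x hx hxg.
    apply indist_sym, HM; auto; intro mx; exact (hxg (hu x hx mx)). }
  apply is_module_of_rep; auto; intros o _ hno.
  exists g; intros m mm.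
  destruct (classic (m = g)) as [->|mg]; [apply indist_refl; intros ->; contradiction|].
  destruct (classic (o = a \/ o = b)) as [oab|oS]; [|apply HM; auto; tauto].
  assert (xm := Xam m mm mg); destruct (proj1 HM m mm) as [ma mb].
  destruct (isolated_pair_absorbs o m oab (proj1 xm) ma mb)
    as [[ang _]|[g' [hg' [xg' hn]]]].
  - destruct (angle_Xalpha_disjoint X m g HX ang hg xm).
  - assert (g' = g) as -> by (apply (Xalpha_unique X m); auto).
    apply indist_sym, hn.
Qed.

End IsolatedPair.

Lemma isolated_prime_pair a b : prime_pair a b ->
  (forall c, ~ X c -> c <> a -> c <> b -> ~ prime_pair c a /\ ~ prime_pair c b) ->
  prime_on R (fun u => u <> a /\ u <> b).
Proof.
  intros hab hiso.
  pose proof (prime_pair_outside a b hab) as XS.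
  split; [apply (three_points_sub X); [exact XS|apply HX]|].
  intros M hM.
  destruct (prime_module_trace X _ M HX hM XS) as [h|[h|[g [hg [hMg hu]]]]].
  - exact (isolated_pair_module_disjoint a b hab hiso M hM h).
  - exact (isolated_pair_module_cover a b hab hiso M hM h).
  - exact (isolated_pair_module_single a b hab hiso M hM g hg hMg hu).
Qed.

Section QaClass.
Variable Y : T -> Prop.
Variables e f : T * T -> Prop.
Hypothesis He : is_class R e.
Hypothesis Hf : is_class R f.
Hypothesis Hef : ~ (forall p, e p <-> f p).
Hypothesis HY : (forall v, Y v <-> in_angle_ef R X e f v) \/
  (exists al, X al /\ forall v, Y v <-> in_Xalpha_ef R X al e f v).

Lemma qa_classes_disjoint p : e p -> f p -> False.
Proof.
  intros hep hfp; apply Hef; intro q.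
  rewrite (class_iff e p q He hep), (class_iff f p q Hf hfp); tauto.
Qed.

Lemma qa_not_in_X v : Y v -> ~ X v.
Proof. intros hv; destruct HY as [h|[al [hal h]]]; apply h in hv; apply hv. Qed.

Lemma qa_twins u c : Y u -> Y c -> twins X u c.
Proof.
  intros hu hc x hx; destruct HY as [h|[al [hal h]]]; apply h in hu; apply h in hc.
  - destruct hu as [_ hu], hc as [_ hc], (hu x hx) as [e1 f1], (hc x hx) as [e2 f2].
    split; [apply (class_iff e (u, x))|apply (class_iff f (x, u))]; auto.
  - destruct hu as [hXu [e1 f1]], hc as [hXc [e2 f2]].
    destruct (classic (x = al)) as [->|nx].
    + split; [apply (class_iff e (u, al))|apply (class_iff f (al, u))]; auto.
    + rewrite in_Xalpha_iff in hXu, hXc; auto.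
      apply (indist_trans x u al c); [apply indist_sym, hXu|apply hXc]; auto.
Qed.

Lemma qa_twins_closed u c : Y u -> ~ X c -> twins X u c -> Y c.
Proof.
  intros hu hc htw; destruct HY as [h|[al [hal h]]]; apply h in hu; apply h.
  - destruct hu as [hA hu]; split; [apply (in_angle_twins X u c); auto|].
    intros x hx; destruct (hu x hx) as [e1 f1], (htw x hx) as [t1 t2].
    split; [apply (class_closed e (u, x))|apply (class_closed f (x, u))]; auto.
  - destruct hu as [hXu [e1 f1]], (htw al hal) as [t1 t2].
    split; [apply (in_Xalpha_twins X al u c); auto|].
    split; [apply (class_closed e (u, al))|apply (class_closed f (al, u))]; auto.
Qed.

Lemma qa_no_crossing u c s t : Y u -> Y c -> u <> c ->
  prime_pair s u -> ~ prime_pair s c -> prime_pair t c -> ~ prime_pair t u -> False.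
Proof.
  intros hu hc uc hsu nsc htc ntu.
  assert (htw := qa_twins u c hu hc).
  assert (nxu := qa_not_in_X u hu); assert (nxc := qa_not_in_X c hc).
  assert (ncu : ~ prime_pair c u) by (apply twins_not_prime_pair, twins_sym, htw).
  assert (nuc : ~ prime_pair u c) by (apply twins_not_prime_pair, htw).
  assert (cs : c <> s) by (intros ->; contradiction).
  assert (ut : u <> t) by (intros ->; contradiction).
  assert (hG1 : absorbed X u c).
  { apply (non_neighbour_absorbed u s); auto using prime_pair_sym. }
  assert (hG2 : absorbed X c u).
  { apply (non_neighbour_absorbed c t); auto using prime_pair_sym. }
  destruct HY as [h|[al [hal h]]]; apply h in hu; apply h in hc.
  - destruct hu as [angu hu], hc as [angc hc].
    destruct hG1 as [[_ g1]|[g [hg [xg _]]]]; [|exact (angle_Xalpha_disjoint X c g HX angc hg xg)].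
    destruct hG2 as [[_ g2]|[g [hg [xg _]]]]; [|exact (angle_Xalpha_disjoint X u g HX angu hg xg)].
    destruct (prime_inhabited X HX) as [x hx].
    destruct (g1 x hx) as [_ a2], (g2 x hx) as [b1 _], (hc x hx) as [ec _], (hu x hx) as [_ fu].
    apply (qa_classes_disjoint (c, u)).
    + apply (class_closed e (c, x)); auto; apply R_sym; auto.
    + apply (class_closed f (x, u)); auto; apply R_sym; auto.
  - destruct hu as [xau [eu fu]], hc as [xac [ec fc]].
    destruct hG1 as [[ang _]|[g [hg [xg n1]]]];
      [exact (angle_Xalpha_disjoint X c al HX ang hal xac)|].
    destruct hG2 as [[ang _]|[g' [hg' [xg' n2]]]];
      [exact (angle_Xalpha_disjoint X u al HX ang hal xau)|].
    assert (g = al) as -> by (apply (Xalpha_unique X c); auto).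
    assert (g' = al) as -> by (apply (Xalpha_unique X u); auto).
    destruct n1 as [_ a2], n2 as [b1 _].
    apply (qa_classes_disjoint (u, c)).
    + apply (class_closed e (u, al)); auto.
    + apply (class_closed f (al, c)); auto.
Qed.

Lemma qa_minimal_neighbourhood (l : list T) : (exists u, Y u) -> (forall v, ~ X v -> In v l) ->
  exists u, Y u /\ forall y, Y y -> forall r, prime_pair r u -> prime_pair r y.
Proof.
  intros [u0 hu0] hl.
  destruct (list_exists_minimal _ Y (fun x y => forall r, prime_pair r x -> prime_pair r y) l)
    as [u [_ [hu hmin]]]; eauto.
  - intros x y hx hy; destruct (classic (x = y)) as [<-|ne]; [left; auto|].
    apply NNPP; intro hn.
    assert (h1 : exists s, prime_pair s x /\ ~ prime_pair s y).
    { apply NNPP; intro hh; apply hn; left; intros r hr; apply NNPP; intro h'.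
      apply hh; exists r; auto. }
    assert (h2 : exists t, prime_pair t y /\ ~ prime_pair t x).
    { apply NNPP; intro hh; apply hn; right; intros r hr; apply NNPP; intro h'.
      apply hh; exists r; auto. }
    destruct h1 as [s [hs1 hs2]], h2 as [t [ht1 ht2]].
    apply (qa_no_crossing x y s t); auto.
  - exists u0; split; auto; apply hl, qa_not_in_X, hu0.
  - exists u; split; auto; intros y hy; apply hmin; auto; apply hl, qa_not_in_X, hy.
Qed.

Lemma qa_dichotomy (l : list T) : (exists u, Y u) -> (forall v, ~ X v -> In v l) ->
  (exists a b, prime_pair a b /\
     forall c, ~ X c -> c <> a -> c <> b -> ~ prime_pair c a /\ ~ prime_pair c b) \/
  (exists u y s t, Y u /\ Y y /\ u <> y /\ prime_pair s u /\ prime_pair y s /\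
     prime_pair y t /\ ~ prime_pair t u /\ (forall r, prime_pair r u -> prime_pair r y)).
Proof.
  intros hY hl.
  destruct (qa_minimal_neighbourhood l hY hl) as [u [hu hmin]].
  assert (nxu := qa_not_in_X u hu).
  destruct (exists_prime_pair u nxu) as [s0 hs0].
  destruct (classic (exists s y, prime_pair s u /\ prime_pair y s /\ y <> u))
    as [[s [y [hsu [hys yu]]]]|hno].
  - right.
    assert (nxy : ~ X y) by apply hys.
    assert (hy : Y y).
    { apply (qa_twins_closed u y hu nxy), (twins_sub X (addv X s)); [unfold addv; auto|].
      apply common_neighbour_twins; auto using prime_pair_sym. }
    assert (hdiff : exists t, prime_pair t y /\ ~ prime_pair t u).
    { apply NNPP; intro hh; apply yu, (same_neighbours_eq y u nxy nxu).
      - intro r; split; [intro h; apply NNPP; intro h'; apply hh; exists r; auto|apply hmin, hy].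
      - exists s; apply prime_pair_sym, hys. }
    destruct hdiff as [t [hty ntu]].
    exists u, y, s, t; refine (conj hu (conj hy (conj (not_eq_sym yu) (conj hsu (conj hys
      (conj (prime_pair_sym _ _ hty) (conj ntu (hmin y hy)))))))).
  - left; exists u, s0; split; [apply prime_pair_sym, hs0|].
    assert (only_u : forall s r, prime_pair s u -> prime_pair r s -> r = u)
      by (intros s r h1 h2; apply NNPP; intro ne; apply hno; exists s, r; auto).
    intros c hc cu cs; split; [intro hcu|intro hcs; exact (cu (only_u s0 c hs0 hcs))].
    apply cs, (same_neighbours_eq c s0 hc (proj1 hs0)); [|exists u; apply prime_pair_sym, hcu].
    intro r; split; intro hr.
    + rewrite (only_u c r hcu hr); apply prime_pair_sym, hs0.
    + rewrite (only_u s0 r hs0 hr); apply prime_pair_sym, hcu.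
Qed.

(* For |X̄| = 5, a neighbour of the fifth vertex z makes z a twin of s or of u, and
   comparing neighbourhoods then identifies z with one of the other four vertices. *)
Section FiveVertices.
Variables u y s t z : T.
Hypothesis Hu : Y u.
Hypothesis Huy : u <> y.
Hypothesis Hsu : prime_pair s u.
Hypothesis Hys : prime_pair y s.
Hypothesis Hyt : prime_pair y t.
Hypothesis Htu : ~ prime_pair t u.
Hypothesis Hle : forall r, prime_pair r u -> prime_pair r y.
Hypothesis Hz : ~ X z.
Hypothesis Hzu : z <> u.
Hypothesis Hzs : z <> s.
Hypothesis Hzy : z <> y.
Hypothesis Hzt : z <> t.
Hypothesis Hall : forall w, ~ X w -> In w [z; u; s; y; t].

Ltac pair_solve :=
  try (let H := fresh in intro H);
  first [ assumption | apply prime_pair_sym; assumption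
        | exfalso; match goal with
          | H : prime_pair ?a ?a |- _ => exact (prime_pair_irrefl _ H)
          | H : prime_pair ?a ?b, N : ~ prime_pair ?a ?b |- _ => exact (N H)
          | H : prime_pair ?a ?b, N : ~ prime_pair ?b ?a |- _ => exact (N (prime_pair_sym _ _ H))
          end ].

Ltac neighbours_by_cases :=
  let r := fresh "r" in let hr := fresh "hr" in
  intro r; split; intro hr; destruct (Hall r (proj1 hr)) as [<-|[<-|[<-|[<-|[<-|[]]]]]]; pair_solve.

Let twins_u_y : twins X u y.
Proof.
  apply (twins_sub X (addv X s)); [unfold addv; auto|].
  apply common_neighbour_twins; auto using prime_pair_sym.
Qed.

Let twins_s_t : twins X s t.
Proof.
  apply (twins_sub X (addv X y)); [unfold addv; auto|].
  apply common_neighbour_twins; auto using prime_pair_sym.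
  intros ->; exact (Htu Hsu).
Qed.

Lemma five_not_twin_s : twins X s z -> False.
Proof.
  intros tsz.
  assert (nsz : ~ prime_pair s z) by (apply twins_not_prime_pair, tsz).
  assert (ntz : ~ prime_pair t z)
    by (apply twins_not_prime_pair, (twins_trans X t s z); auto using twins_sym).
  assert (nst : ~ prime_pair s t) by (apply twins_not_prime_pair, twins_s_t).
  destruct (classic (prime_pair z u)) as [azu|nazu].
  - assert (azy : prime_pair z y) by (apply Hle, azu).
    apply Hzs, (same_neighbours_eq z s Hz (proj1 Hsu)); [neighbours_by_cases|exists u; pair_solve].
  - destruct (classic (prime_pair z y)) as [azy|nazy].
    + apply Hzt, (same_neighbours_eq z t Hz (proj1 (proj2 Hyt)));
        [neighbours_by_cases|exists y; pair_solve].
    + destruct (exists_prime_pair z Hz) as [w hw].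
      destruct (Hall w (proj1 hw)) as [<-|[<-|[<-|[<-|[<-|[]]]]]]; pair_solve.
Qed.

Lemma five_not_twin_u : twins X u z -> False.
Proof.
  intros tuz.
  assert (hz : Y z) by (apply (qa_twins_closed u z); auto).
  assert (nuz : ~ prime_pair u z) by (apply twins_not_prime_pair, tuz).
  assert (nyz : ~ prime_pair y z)
    by (apply twins_not_prime_pair, (twins_trans X y u z); auto using twins_sym).
  assert (nuy : ~ prime_pair u y) by (apply twins_not_prime_pair, twins_u_y).
  destruct (classic (prime_pair z s)) as [azs|nazs];
    destruct (classic (prime_pair z t)) as [azt|nazt].
  - apply Hzy, (same_neighbours_eq z y Hz (proj1 Hys)); [neighbours_by_cases|exists s; pair_solve].
  - apply Hzu, (same_neighbours_eq z u Hz (proj1 (proj2 Hsu)));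
      [neighbours_by_cases|exists s; pair_solve].
  - apply (qa_no_crossing z u t s hz Hu Hzu); pair_solve.
  - destruct (exists_prime_pair z Hz) as [w hw].
    destruct (Hall w (proj1 hw)) as [<-|[<-|[<-|[<-|[<-|[]]]]]]; pair_solve.
Qed.

Lemma five_vertices_absurd : False.
Proof.
  assert (twin_of : forall a b, prime_pair a b -> prime_pair z b -> z <> a -> twins X a z).
  { intros a b hab hzb hza; apply (twins_sub X (addv X b)); [unfold addv; auto|].
    apply common_neighbour_twins; auto. }
  destruct (exists_prime_pair z Hz) as [w hw].
  destruct (Hall w (proj1 hw)) as [<-|[<-|[<-|[<-|[<-|[]]]]]].
  - exact (prime_pair_irrefl _ hw).
  - apply five_not_twin_s, (twin_of s u); auto using prime_pair_sym.
  - apply five_not_twin_u, (twin_of u s); auto using prime_pair_sym.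
  - apply five_not_twin_s, (twin_of s y); auto using prime_pair_sym.
  - apply five_not_twin_u, (twins_trans X u y z twins_u_y), (twin_of y t);
      auto using prime_pair_sym.
Qed.

End FiveVertices.

Lemma qa_transfer a b u : Y u ->
  (in_angle R (add2 X a b) u \/ exists g, X g /\ in_Xalpha R (add2 X a b) g u) ->
  exists Y', in_qa R (add2 X a b) Y'.
Proof.
  intros hu hP.
  assert (hXW : forall x, X x -> add2 X a b x) by (unfold add2, addv; auto).
  destruct (prime_inhabited X HX) as [x0 hx0].
  destruct HY as [h|[al [hal h]]]; apply h in hu.
  - destruct hP as [hA|[g [hg hXg]]].
    + exists (in_angle_ef R (add2 X a b) e f); split.
      * exists u; split; auto; intros al hal; destruct hu as [_ hu].
        destruct (hu x0 hx0) as [e0 f0],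
          (proj2 (proj1 (in_angle_iff _ u) hA) al x0 hal (hXW x0 hx0)) as [r1 r2].
        split; [apply (class_closed e (u, x0))|apply (class_closed f (x0, u))]; auto;
          apply R_sym; auto.
      * exists e, f; refine (conj He (conj Hf (conj Hef _))); left; intro v; tauto.
    + destruct (angle_Xalpha_disjoint X u g HX (proj1 hu) hg (in_Xalpha_sub X _ g u hXW hg hXg)).
  - destruct hP as [hA|[g [hg hXg]]].
    + destruct (angle_Xalpha_disjoint X u al HX (in_angle_sub X _ u hXW hA) hal (proj1 hu)).
    + assert (g = al) as ->.
      { apply (Xalpha_unique X u); auto; [apply (in_Xalpha_sub X (add2 X a b)); auto|apply hu]. }
      exists (in_Xalpha_ef R (add2 X a b) al e f); split.
      * exists u; split; auto; apply hu.
      * exists e, f; refine (conj He (conj Hf (conj Hef _))); right; exists al.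
        split; [apply hXW, hal|intro v; tauto].
Qed.

Lemma qa_reduction l : NoDup l -> (forall v, ~ X v <-> In v l) -> (exists u, Y u) ->
  removable_pair X \/
  (length l <> 5 /\ exists y t, prime_pair y t /\ exists Y', in_qa R (add2 X y t) Y').
Proof.
  intros hnd hl hY.
  destruct (qa_dichotomy l hY (fun v hv => proj1 (hl v) hv))
    as [[a [b [hab hiso]]]|[u [y [s [t [hu [hy [uy [hsu [hys [hyt [ntu hle]]]]]]]]]]]].
  - left; exists a, b; pose proof hab as (ha & hb & nab & _).
    refine (conj ha (conj hb (conj nab _))); apply isolated_prime_pair; auto.
  - right.
    assert (nuy : ~ prime_pair u y).
    { apply twins_not_prime_pair, (twins_sub X (addv X s)); [unfold addv; auto|].
      apply common_neighbour_twins; auto using prime_pair_sym. }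
    assert (ut : u <> t) by (intros ->; exact (nuy (prime_pair_sym _ _ hyt))).
    split.
    + intro h5.
      assert (st : s <> t) by (intros ->; contradiction).
      assert (hk : NoDup [u; s; y; t]).
      { destruct hsu as (_ & _ & su & _), hys as (_ & _ & ys & _), hyt as (_ & _ & yt & _).
        repeat constructor; simpl; intuition congruence. }
      assert (hkl : incl [u; s; y; t] l).
      { intros w hw; apply hl; simpl in hw.
        destruct hw as [<-|[<-|[<-|[<-|[]]]]]; [apply hsu|apply hsu|apply hys|apply hyt]. }
      destruct (NoDup_extra _ l [u; s; y; t] hnd hk ltac:(simpl; lia) hkl) as [z [hz [hzk hall]]].
      simpl in hzk.
      apply (five_vertices_absurd u y s t z); auto; try (intros ->; tauto).
      * apply hl, hz.
      * intros w hw; apply hall, hl, hw.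
    + exists y, t; split; auto.
      apply (qa_transfer y t u hu), (non_neighbour_cases y t u hyt (qa_not_in_X u hu));
        auto using prime_pair_sym.
Qed.

End QaClass.
End NoSmallPrimeExtension.

Lemma complement_addv (B : T -> Prop) l a :
  NoDup l -> (forall v, ~ B v <-> In v l) -> ~ B a ->
  exists l', NoDup l' /\ (forall v, ~ addv B a v <-> In v l') /\ length l = S (length l').
Proof.
  intros hnd hl ha.
  destruct (NoDup_remove_one _ l a hnd (proj1 (hl a) ha)) as [l' [hnd' [hin hlen]]].
  exists l'; split; auto; split; auto.
  intro v; rewrite hin, <- hl; unfold addv; tauto.
Qed.

Lemma removable_pair_sub (X B : T -> Prop) :
  (forall x, X x -> B x) -> removable_pair B -> removable_pair X.
Proof.
  intros hXB [v [w [hv [hw h]]]]; exists v, w; split; [|split]; auto; intro; auto.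
Qed.

Lemma removable_pair_of_even_complement k : prime_on R (fun _ => True) ->
  forall B l, prime_on R B -> NoDup l -> (forall v, ~ B v <-> In v l) ->
  length l = 2 * k + 2 -> removable_pair B.
Proof.
  intros Hsig; induction k as [|k IH]; intros B l hB hnd hl hlen.
  - destruct l as [|v [|w [|z l]]]; simpl in hlen; try lia.
    assert (hv : ~ B v) by (apply hl; simpl; auto).
    assert (hw : ~ B w) by (apply hl; simpl; auto).
    exists v, w; split; [exact hv|split; [exact hw|split]].
    + intros <-; inversion hnd as [|? ? hvl]; apply hvl; left; auto.
    + apply (prime_on_ext B); auto; intro u; split.
      * intros hu; split; intros ->; contradiction.
      * intros [uv uw]; apply NNPP; intro hn; apply hl in hn.
        destruct hn as [<-|[<-|[]]]; contradiction.
  - destruct l as [|a0 [|b0 l0]]; simpl in hlen; try lia.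
    assert (ha0 : ~ B a0) by (apply hl; simpl; auto).
    assert (hb0 : ~ B b0) by (apply hl; simpl; auto).
    assert (ab0 : a0 <> b0) by (intros <-; inversion hnd as [|? ? hal]; apply hal; left; auto).
    destruct (prime_pair_extension B a0 b0 Hsig hB ha0 hb0 ab0) as [a [b [ha [hb [nab hp]]]]].
    destruct (complement_addv B _ a hnd hl ha) as [l1 [hnd1 [hl1 hlen1]]].
    destruct (complement_addv (addv B a) l1 b hnd1 hl1 ltac:(intros [h| ->]; contradiction))
      as [l2 [hnd2 [hl2 hlen2]]].
    apply (removable_pair_sub B (add2 B a b)); [unfold add2, addv; auto|].
    apply (IH (add2 B a b) l2); auto; simpl in *; lia.
Qed.

Lemma removable_pair_of_qa : prime_on R (fun _ => True) ->
  forall n X l, length l = n -> prime_on R X -> NoDup l -> (forall v, ~ X v <-> In v l) ->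
  4 <= n -> (exists Y, in_qa R X Y) -> removable_pair X.
Proof.
  intros Hsig n; induction n as [n IH] using (well_founded_induction lt_wf).
  intros X l hlen hX hnd hl h4 [Y hY].
  destruct (Nat.Even_or_Odd n) as [[k hk]|[k hk]].
  { apply (removable_pair_of_even_complement (k - 1) Hsig X l); auto; lia. }
  destruct (classic (exists u, ~ X u /\ prime_on R (addv X u))) as [[u [hu hpu]]|hsingle].
  { destruct (complement_addv X l u hnd hl hu) as [l1 [hnd1 [hl1 hlen1]]].
    apply (removable_pair_sub X (addv X u)); [unfold addv; auto|].
    apply (removable_pair_of_even_complement (k - 1) Hsig _ l1); auto; lia. }
  destruct (classic (exists a b c, ~ X a /\ ~ X b /\ a <> b /\ prime_on R (add2 X a b) /\
    ~ X c /\ c <> a /\ c <> b /\ prime_on R (addv (add2 X a b) c)))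
    as [[a [b [c (ha & hb & nab & hab & hc & ca & cb & hpc)]]]|htriple].
  { destruct (complement_addv X l a hnd hl ha) as [l1 [hnd1 [hl1 hlen1]]].
    destruct (complement_addv _ l1 b hnd1 hl1 ltac:(intros [h| ->]; contradiction))
      as [l2 [hnd2 [hl2 hlen2]]].
    destruct (complement_addv _ l2 c hnd2 hl2 ltac:(intros [[h| ->]| ->]; contradiction))
      as [l3 [hnd3 [hl3 hlen3]]].
    apply (removable_pair_sub X (addv (add2 X a b) c)); [unfold add2, addv; auto|].
    apply (removable_pair_of_even_complement (k - 2) Hsig _ l3); auto; lia. }
  assert (NoSingle : forall v, ~ X v -> ~ prime_on R (addv X v))
    by (intros v hv hp; apply hsingle; exists v; auto).
  assert (NoTriple : forall a b c, ~ X a -> ~ X b -> a <> b -> prime_on R (add2 X a b) ->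
    ~ X c -> c <> a -> c <> b -> ~ prime_on R (addv (add2 X a b) c))
    by (intros a b c ? ? ? ? ? ? ? ?; apply htriple; exists a, b, c; tauto).
  destruct hY as [hYne [e [f [He [Hf [Hef HY]]]]]].
  destruct (qa_reduction Hsig X hX NoSingle NoTriple Y e f He Hf Hef HY l hnd hl hYne)
    as [h|[h5 [y [t [[hy [ht [nyt pyt]]] hY']]]]]; [exact h|].
  destruct (complement_addv X l y hnd hl hy) as [l1 [hnd1 [hl1 hlen1]]].
  destruct (complement_addv _ l1 t hnd1 hl1 ltac:(intros [h| ->]; contradiction))
    as [l2 [hnd2 [hl2 hlen2]]].
  apply (removable_pair_sub X (add2 X y t)); [unfold add2, addv; auto|].
  apply (IH (length l2) ltac:(lia) (add2 X y t) l2); auto; lia.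
Qed.

End TwoStructure.

Theorem theoremB1 (T : Type) (R : T * T -> T * T -> Prop) (X : T -> Prop) :
  is_2structure R ->
  prime_on R (fun _ => True) ->
  (exists v, ~ X v) ->
  prime_on R X ->
  (exists Y, in_qa R X Y) ->
  (exists s : list T, NoDup s /\ (forall v, ~ X v <-> In v s) /\ 4 <= length s) ->
  exists v w, ~ X v /\ ~ X w /\ v <> w /\
    prime_on R (fun u => u <> v /\ u <> w).
Proof.
  intros HR Hsig _ HX HY [s [hnd [hl h4]]].
  exact (removable_pair_of_qa T R HR Hsig (length s) X s eq_refl HX hnd hl h4 HY).
Qed.
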